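(* Let $n\ge4$ and $\sigma=(g_1,\dots,g_{n-3},h_1)$. Let $(\mathbf A,\mathbf B,\mathbf C,f_B,f_C)$ be a V-formation in $\mathcal G_n$. Then $(\mathbf A,\mathbf B,\mathbf C,f_B,f_C)$ admits amalgamation in $\mathcal G_n$ if and only if both of the following hold: (a) for each $x\in D^\sigma(\mathbf B)$ there exist $y\in D^\sigma(\mathbf B)$ and $z\in D^\sigma(\mathbf C)$ such that $x\simeq^\sigma_{D^\sigma(\mathbf B)}y$ and $y\circ f_B=z\circ f_C$; (b) for each $x'\in D^\sigma(\mathbf C)$ there exist $y'\in D^\sigma(\mathbf C)$ and $z'\in D^\sigma(\mathbf B)$ such that $x'\simeq^\sigma_{D^\sigma(\mathbf C)}y'$ and $y'\circ f_C=z'\circ f_B$.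
   Context: $\mathbf C_n$ is the Heyting algebra on the chain $\{0<1<\dots<n-1\}$, with min, max, $\bot=0$, $\top=n-1$, $a\to b=\top$ if $a\le b$, $a\to b=b$ if $b<a$. $\mathcal G_n$ is the class of algebras isomorphic to subalgebras of direct powers of $\mathbf C_n$; $\mathcal G_n(\mathbf A,\mathbf C_n)$ is the set of Heyting homomorphisms $\mathbf A\to\mathbf C_n$. $h_1$ is the endomorphism of $\mathbf C_n$ with $h_1(k)=k+1$ for $1\le k<n-1$ and $h_1(k)=k$ for $k\in\{0,n-1\}$. For $1\le i\le n-3$, $g_i$ is the partial map with domain $C_n\setminus\{i\}$ with $g_i(i+1)=i$, $g_i(k)=k$ for $k\notin\{i,i+1\}$. Write $\sigma_i=g_i$ ($i\le n-3$), $\sigma_{n-2}=h_1$. For $\mathbf D\in\mathcal G_n$, $D^\sigma(\mathbf D)$ is $\mathcal G_n(\mathbf D,\mathbf C_n)$ with lifted (partial) operations $\sigma_i^{\mathbf X}(x)=\sigma_i\circ x$, defined iff $\operatorname{ran}x\subseteq\operatorname{dom}\sigma_i$. For $\mathbf X=D^\sigma(\mathbf D)$, $x\simeq^\sigma_{\mathbf X}y$ iff $x=y$ or there is a finite sequence $x=z_0,\dots,z_N=y$ in $X$ such that for each $j<N$ some $i_j\in\{1,\dots,n-3\}$ satisfies $z_{j+1}=\sigma_{i_j}^{\mathbf X}(z_j)$ or $z_j=\sigma_{i_j}^{\mathbf X}(z_{j+1})$. A V-formation in a class $\mathcal A$ is a quintuple $(\mathbf A,\mathbf B,\mathbf C,f_B,f_C)$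 with $\mathbf A,\mathbf B,\mathbf C\in\mathcal A$ and injective homomorphisms $f_B\colon\mathbf A\to\mathbf B$, $f_C\colon\mathbf A\to\mathbf C$. It admits amalgamation if there are $\mathbf E\in\mathcal A$ and embeddings $k_B\colon\mathbf B\to\mathbf E$, $k_C\colon\mathbf C\to\mathbf E$ with $k_B\circ f_B=k_C\circ f_C$. *)

From mathcomp Require Import all_boot.
From Stdlib Require Import Relations.
Set Implicit Arguments. Unset Strict Implicit. Unset Printing Implicit Defensive.

(* Algebras in the Heyting-algebra signature (meet, join, ->, bot, top).
   No axioms are imposed: membership in G_n (below) forces them. *)
Record HAlg := {
  carrier :> Type;
  hmeet : carrier -> carrier -> carrier;
  hjoin : carrier -> carrier -> carrier;
  himp  : carrier -> carrier -> carrier;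
  hbot  : carrier;
  htop  : carrier }.

Definition is_hom (A B : HAlg) (f : A -> B) : Prop :=
  (forall a b, f (hmeet a b) = hmeet (f a) (f b)) /\
  (forall a b, f (hjoin a b) = hjoin (f a) (f b)) /\
  (forall a b, f (himp a b) = himp (f a) (f b)) /\
  f (hbot A) = hbot B /\ f (htop A) = htop B.

Definition is_embedding (A B : HAlg) (f : A -> B) : Prop :=
  is_hom f /\ injective f.

(* The chain C_n on {0 < 1 < ... < n-1}.  Carrier 'I_(n.-1.+1), which for
   n >= 1 is exactly {0,...,n-1}. *)
Section Chain.
Variable n : nat.
Definition Ct := 'I_(n.-1.+1).
Definition cmeet (a b : Ct) : Ct := if (a <= b)%N then a else b.
Definition cjoin (a b : Ct) : Ct := if (a <= b)%N then b else a.
Definition cimp (a b : Ct) : Ct := if (a <= b)%N then ord_max else b.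
End Chain.

Definition Cn (n : nat) : HAlg :=
  {| carrier := Ct n; hmeet := @cmeet n; hjoin := @cjoin n; himp := @cimp n;
     hbot := ord0; htop := ord_max |}.

Definition Cpow (n : nat) (I : Type) : HAlg :=
  {| carrier := I -> Ct n;
     hmeet := fun f g i => cmeet (f i) (g i);
     hjoin := fun f g i => cjoin (f i) (g i);
     himp  := fun f g i => cimp (f i) (g i);
     hbot  := fun _ => ord0;
     htop  := fun _ => ord_max |}.

Definition in_G (n : nat) (A : HAlg) : Prop :=
  exists (I : Type) (e : A -> Cpow n I), is_embedding e.

(* The maps sigma_i on values (as naturals).
   g_i : partial, domain C_n \ {i}, g_i(i+1) = i, identity elsewhere.
   h_1 : h_1(k) = k+1 for 1 <= k < n-1, fixes 0 and n-1. *)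
Definition g_map (i k : nat) : nat := if k == i.+1 then i else k.
Definition h1_map (n k : nat) : nat :=
  if (1 <= k) && (k < n.-1) then k.+1 else k.

(* sigma_i^X(x) = y, for 1 <= i <= n-3 (the g_i's), on X = D^sigma(D):
   defined iff i is not in the range of x, and then y = g_i o x. *)
Definition sigma_step (n : nat) (D : HAlg) (x y : D -> Cn n) : Prop :=
  is_hom x /\ is_hom y /\
  exists i, (1 <= i <= n - 3)%N /\
    forall a, (nat_of_ord (x a) <> i) /\ nat_of_ord (y a) = g_map i (x a).

Definition sigma_equiv (n : nat) (D : HAlg) : relation (D -> Cn n) :=
  clos_refl_sym_trans _ (@sigma_step n D).

Definition V_formation (n : nat) (A B C : HAlg) (fB : A -> B) (fC : A -> C) : Prop :=
  in_G n A /\ in_G n B /\ in_G n C /\ is_embedding fB /\ is_embedding fC.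

Definition admits_amalgamation (n : nat) (A B C : HAlg) (fB : A -> B) (fC : A -> C) : Prop :=
  exists (E : HAlg) (kB : B -> E) (kC : C -> E),
    in_G n E /\ is_embedding kB /\ is_embedding kC /\
    (forall a, kB (fB a) = kC (fC a)).

From mathcomp Require Import all_boot zify.
From Stdlib Require Import Relations.
From Stdlib Require List.
From mathcomp Require Import boolp classical_sets filter.
Set Implicit Arguments. Unset Strict Implicit. Unset Printing Implicit Defensive.

(* The whole argument rests on one invariant: the ORDER TYPE of a homomorphism
   x : B -> C_n, i.e. the relation x a <= x b on B.  We prove
   (1) for homomorphisms, x ~^sigma y holds iff x and y have the same order type.
       Each g_i-step preserves the order type; conversely every homomorphism is
       connected by g_i-steps (decreasing the sum of its values) to a
       "compressed" one, whose values below the top form an initial segment,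
       and a compressed homomorphism is determined by its order type;
   (2) if B embeds into a power C_n^J, every homomorphism x : B -> C_n has the
       order type of W restricted to B for some homomorphism W : C_n^J -> C_n.
       Finitely many order constraints are realised by a coordinate projection
       followed by a truncation of the chain; an ultrafilter limit of these
       maps realises all constraints at once.
   Necessity of (a) and (b) follows from (1) and (2) applied inside the
   amalgam E <= C_n^J.  Sufficiency: the power of C_n indexed by all compatible
   pairs (y, z) of homomorphisms is an amalgam, its projections being
   injective because (a), (b) and (1) supply every order type, and homomorphisms
   into C_n separate the points of algebras in G_n. *)

Lemma hom_comp (A B C : HAlg) (f : A -> B) (g : B -> C) :
  is_hom f -> is_hom g -> is_hom (fun a => g (f a)).
Proof.
move=> [fm [fj [fi [fb ft]]]] [gm [gj [gi [gb gt]]]].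
by split; [|split; [|split; [|split]]] => *;
  rewrite ?fm ?fj ?fi ?fb ?ft ?gm ?gj ?gi ?gb ?gt.
Qed.

Lemma emb_comp (A B C : HAlg) (f : A -> B) (g : B -> C) :
  is_embedding f -> is_embedding g -> is_embedding (fun a => g (f a)).
Proof.
by move=> [hf injf] [hg injg]; split; [exact: hom_comp | move=> a b /injg /injf].
Qed.

Lemma proj_hom n (I : Type) (i : I) : is_hom (fun f : Cpow n I => f i : Cn n).
Proof. by []. Qed.

Lemma tuple_hom n (I : Type) (B : HAlg) (pr : I -> B -> Cn n) :
  (forall i, is_hom (pr i)) -> is_hom (fun b => (fun i => pr i b) : Cpow n I).
Proof.
move=> hp; split; [|split; [|split; [|split]]] => *;
  apply: functional_extensionality_dep => i; have [? [? [? [? ?]]]] := hp i; by [].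
Qed.

Lemma Cpow_in_G n (I : Type) : in_G n (Cpow n I).
Proof. by exists I, id; split. Qed.

Lemma in_G_separates n (B : HAlg) (b b' : B) : in_G n B -> b <> b' ->
  exists x : B -> Cn n, is_hom x /\ x b <> x b'.
Proof.
move=> [I [e [he inj_e]]] neq.
have [i hi] : exists i, e b i <> e b' i.
  apply: contrapT => none; apply/neq/inj_e/functional_extensionality_dep => i.
  by apply: contrapT => ne; apply: none; exists i.
by exists (fun a => e a i); split => //; apply: hom_comp he (proj_hom _ _).
Qed.

Definition same_order n (T : Type) (x y : T -> Cn n) : Prop :=
  forall a b, ((x a : nat) <= x b) = ((y a : nat) <= y b).

Lemma same_order_sym n T (x y : T -> Cn n) : same_order x y -> same_order y x.
Proof. by move=> xy a b; rewrite xy. Qed.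

Lemma same_order_trans n T (x y z : T -> Cn n) :
  same_order x y -> same_order y z -> same_order x z.
Proof. by move=> xy yz a b; rewrite xy yz. Qed.

Lemma same_order_eq n T (x y : T -> Cn n) a b :
  same_order x y -> x a = x b -> y a = y b.
Proof. by move=> xy xab; apply/val_inj/eqP; rewrite eqn_leq -!xy xab leqnn. Qed.

Lemma same_order_hom n (B : HAlg) (x y : B -> Cn n) :
  is_hom x -> same_order x y -> y (hbot B) = ord0 -> y (htop B) = ord_max ->
  is_hom y.
Proof.
move=> [xm [xj [xi [xb xt]]]] xy yb yt.
have xyE a b : (y a : nat) <= y b = ((x a : nat) <= x b) by rewrite xy.
split; [|split; [|split]] => // a b /=.
- by rewrite /cmeet xyE; case: ifP => le; apply: (same_order_eq xy);
    rewrite xm /= /cmeet le.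
- by rewrite /cjoin xyE; case: ifP => le; apply: (same_order_eq xy);
    rewrite xj /= /cjoin le.
- rewrite /cimp xyE; case: ifP => le; last first.
    by apply: (same_order_eq xy); rewrite xi /= /cimp le.
  by rewrite -yt; apply: (same_order_eq xy); rewrite xi xt /= /cimp le.
Qed.

(* A g_i-step leaves the order type unchanged, since g_i is strictly monotone
   on its domain C_n \ {i}. *)
Lemma sigma_step_same_order n (B : HAlg) (x y : B -> Cn n) :
  sigma_step x y -> same_order x y.
Proof.
move=> [_ [_ [i [_ xy]]]] a b.
have [xa ->] := xy a; have [xb ->] := xy b.
rewrite /g_map; case: eqP; case: eqP; lia.
Qed.

Lemma sigma_equiv_same_order n (B : HAlg) (x y : B -> Cn n) :
  sigma_equiv x y -> same_order x y.
Proof.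
elim=> [u v /sigma_step_same_order // | u _ // | u v _ | u v w _ uv _ vw].
- exact: same_order_sym.
- exact: same_order_trans uv vw.
Qed.

Definition is_value n (T : Type) (x : T -> Cn n) (v : nat) : Prop :=
  exists a, x a = v :> nat.

Definition compressed n (T : Type) (x : T -> Cn n) : Prop :=
  forall i, 1 <= i <= n - 3 -> is_value x i.+1 -> is_value x i.

Definition values n (T : Type) (x : T -> Cn n) : {set 'I_(n.-1.+1)} :=
  [set v | `[< exists a, x a = v >]].

Definition potential n (T : Type) (x : T -> Cn n) : nat :=
  \sum_(v in values x) (v : nat).

Definition g_ord n (i : nat) (v : 'I_(n.-1.+1)) : 'I_(n.-1.+1) :=
  if (v : nat) == i.+1 then inord i else v.

Lemma g_move n (B : HAlg) (x : B -> Cn n) i :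
  is_hom x -> 1 <= i <= n - 3 -> ~ is_value x i -> is_value x i.+1 ->
  exists y, sigma_step x y /\ potential y < potential x.
Proof.
move=> hx /andP [i_ge1 i_le] no_i [a0 xa0].
have iK : (inord i : 'I_(n.-1.+1)) = i :> nat by rewrite inordK //; lia.
have i1K : (inord i.+1 : 'I_(n.-1.+1)) = i.+1 :> nat by rewrite inordK //; lia.
have gE (v : 'I_(n.-1.+1)) : (g_ord i v : nat) = g_map i v.
  by rewrite /g_ord /g_map; case: ifP.
have x_ne_i a : (x a : nat) <> i by move=> xai; apply: no_i; exists a.
pose y a : Cn n := g_ord i (x a).
have [_ [_ [_ [xb xt]]]] := hx.
have xy : same_order x y.
  by move=> a b; rewrite !gE /g_map; have := x_ne_i a; have := x_ne_i b;
    case: eqP; case: eqP; lia.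
have hy : is_hom y.
  apply: (same_order_hom hx xy); apply: val_inj; rewrite /y /g_ord ?xb ?xt //=.
  by case: eqP => //; lia.
exists y; split.
  split=> //; split=> //; exists i; split=> [|a]; first lia.
  by split; [apply: x_ne_i | rewrite gE].
have values_y : values y = inord i |: (values x :\ inord i.+1).
  apply/setP => v; rewrite !inE; apply/asboolP/idP.
  - move=> [a <-]; rewrite /y /g_ord; case: ifP => [_|ne]; first by rewrite eqxx.
    apply/orP; right; apply/andP; split; last by apply/asboolP; exists a.
    by apply/eqP => xai1; rewrite xai1 i1K eqxx in ne.
  - case/orP => [/eqP -> | /andP [/eqP ne /asboolP [a xa]]].
      by exists a0; rewrite /y /g_ord xa0 eqxx.
    exists a; rewrite /y /g_ord; case: ifP => // /eqP xai1.
    by exfalso; apply: ne; rewrite -xa; apply/val_inj; rewrite /= xai1 i1K.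
have i1_in : inord i.+1 \in values x.
  by rewrite inE; apply/asboolP; exists a0; apply/val_inj; rewrite /= i1K.
have i_notin : inord i \notin values x :\ inord i.+1.
  rewrite !inE negb_and; apply/orP; right; apply/asboolP => -[a xa].
  by apply: (x_ne_i a); rewrite xa iK.
rewrite /potential values_y big_setU1 //= (big_setD1 _ i1_in) /= iK i1K.
by rewrite ltn_add2r.
Qed.

Lemma sigma_equiv_compressed n (B : HAlg) (x : B -> Cn n) :
  is_hom x -> exists x', is_hom x' /\ compressed x' /\ sigma_equiv x x'.
Proof.
have [k] := ubnP (potential x); elim: k x => // k IH x pot_x hx.
have [cx | ncx] := pselect (compressed x).
  by exists x; split => //; split => //; apply: rst_refl.
have [i gap] : exists i, 1 <= i <= n - 3 /\ is_value x i.+1 /\ ~ is_value x i.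
  apply: contrapT => none; apply: ncx => i hi vi1; apply: contrapT => nvi.
  by apply: none; exists i.
have [range [vi1 nvi]] := gap.
have [y [xy pot_y]] := g_move hx range nvi vi1.
have [hy _] := proj2 xy.
have [x' [hx' [cx' yx']]] := IH y (leq_trans pot_y pot_x) hy.
by exists x'; split => //; split => //; apply: rst_trans yx'; apply: rst_step.
Qed.

(* A compressed homomorphism lies below every homomorphism of the same order
   type: by induction on x a, the value x a - 1 is attained below a. *)
Lemma compressed_le n (B : HAlg) (x y : B -> Cn n) :
  is_hom x -> is_hom y -> compressed x -> same_order x y ->
  forall a, (x a : nat) <= y a.
Proof.
move=> [_ [_ [_ [xb xt]]]] [_ [_ [_ [yb yt]]]] cx xy a.
have [v] := ubnP (x a); elim: v a => // v IH a xa_lt.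
have xa_bound := ltn_ord (x a); have ya_bound := ltn_ord (y a).
case: (posnP (x a)) => [-> // | xa_pos].
case: (ltnP (x a) n.-1) => xa_top; last first.
  have : (x (htop B) : nat) <= x a by rewrite xt /=; lia.
  by rewrite xy yt /=; lia.
have [a' xa'] : is_value x (x a).-1.
  case: (ltnP 1 (x a)) => xa1.
    by apply: cx; [lia | rewrite prednK //; exists a].
  by exists (hbot B); rewrite xb /=; lia.
have := IH a' ltac:(lia).
have : ~~ ((x a : nat) <= x a') by lia.
by rewrite xy; lia.
Qed.

(* Claim (1): homomorphisms with the same order type are sigma-equivalent,
   as their compressed forms coincide. *)
Lemma same_order_sigma_equiv n (B : HAlg) (x y : B -> Cn n) :
  is_hom x -> is_hom y -> same_order x y -> sigma_equiv x y.
Proof.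
move=> hx hy xy.
have [x' [hx' [cx xx']]] := sigma_equiv_compressed hx.
have [y' [hy' [cy yy']]] := sigma_equiv_compressed hy.
have x'y' : same_order x' y'.
  apply: same_order_trans (sigma_equiv_same_order yy').
  exact: same_order_trans (same_order_sym (sigma_equiv_same_order xx')) xy.
have x'_eq_y' : x' = y'.
  apply: functional_extensionality_dep => a; apply/val_inj/eqP.
  by rewrite eqn_leq (compressed_le hx' hy' cx x'y')
                     (compressed_le hy' hx' cy (same_order_sym x'y')).
rewrite x'_eq_y' in xx'; apply: rst_trans xx' _; exact: rst_sym.
Qed.

Definition truncate n (t : nat) (v : Ct n) : Ct n :=
  if (0 < t) && (t <= v) then ord_max else v.

Lemma truncate_hom n t : is_hom (truncate t : Cn n -> Cn n).
Proof.
have ends : truncate t (@ord0 n.-1) = ord0 /\ truncate t (@ord_max n.-1) = ord_max.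
  by split; apply: val_inj; rewrite /truncate /=; case: ifP => //= /andP []; lia.
split; [|split; [|split]] => // u v; apply: val_inj;
  have := ltn_ord u; have := ltn_ord v;
  rewrite /= /truncate /cmeet /cjoin /cimp; do ![case: ifP => /=]; lia.
Qed.

Lemma cmeet_top n (u v : Ct n) : cmeet u v = ord_max -> u = ord_max /\ v = ord_max.
Proof.
move=> /(congr1 val); have := ltn_ord u; have := ltn_ord v.
by rewrite /cmeet; case: (leqP u v) => /= *; split; apply: val_inj => /=; lia.
Qed.

Lemma cimp_top n (u v : Ct n) : cimp u v = ord_max -> (u : nat) <= v.
Proof.
move=> /(congr1 val); have := ltn_ord u; have := ltn_ord v.
by rewrite /cimp; case: (leqP u v) => //= *; lia.
Qed.

Lemma cjoin_lt_top n (u v : Ct n) :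
  (cjoin u v : nat) < n.-1 -> (u : nat) < n.-1 /\ (v : nat) < n.-1.
Proof. by rewrite /cjoin; case: (leqP u v) => /= *; lia. Qed.

Lemma cimp_lt_top n (u v : Ct n) : (cimp u v : nat) < n.-1 -> ~~ ((u : nat) <= v).
Proof. by rewrite /cimp; case: (leqP u v) => //= _; rewrite ltnn. Qed.

Definition agrees n (T : Type) (x y : T -> Cn n) (p : T * T) : Prop :=
  ((x p.1 : nat) <= x p.2) = ((y p.1 : nat) <= y p.2).

(* For a finite list s of pairs, up_conj x s is the meet of the implications
   p.1 -> p.2 over the pairs x orders upwards, down_disj x s the join of those
   over the pairs x orders downwards.  A homomorphism sending the former to the
   top and the latter below it orders every pair of s as x does. *)
Definition up_conj n (B : HAlg) (x : B -> Cn n) (s : seq (B * B)) : B :=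
  foldr (fun p c => if (x p.1 : nat) <= x p.2 then hmeet (himp p.1 p.2) c else c)
    (htop B) s.

Definition down_disj n (B : HAlg) (x : B -> Cn n) (s : seq (B * B)) : B :=
  foldr (fun p d => if (x p.1 : nat) <= x p.2 then d else hjoin (himp p.1 p.2) d)
    (hbot B) s.

Lemma up_conj_top n (B : HAlg) (x : B -> Cn n) s :
  is_hom x -> x (up_conj x s) = ord_max.
Proof.
move=> [xm [_ [xi [_ xt]]]]; elim: s => [|p s IH] //=.
by case: ifP => le //; rewrite xm xi IH /= /cimp le /cmeet leq_ord.
Qed.

Lemma down_disj_lt_top n (B : HAlg) (x : B -> Cn n) s :
  1 < n -> is_hom x -> (x (down_disj x s) : nat) < n.-1.
Proof.
move=> n_gt1 [_ [xj [xi [xb _]]]].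
elim: s => [|p s IH] /=; first by rewrite xb /=; lia.
case: ifP => le //; rewrite xj xi /= /cimp le /cjoin.
by have := ltn_ord (x p.1); case: ifP; lia.
Qed.

Lemma agrees_of_separating n (B : HAlg) (x mu : B -> Cn n) s : is_hom mu ->
  mu (up_conj x s) = ord_max -> (mu (down_disj x s) : nat) < n.-1 ->
  List.Forall (agrees x mu) s.
Proof.
move=> [mm [mj [mi _]]]; elim: s => [|p s IH] //=.
case: ifP => le_x; rewrite ?mm ?mj mi.
- move=> /cmeet_top [/cimp_top le_mu c_top] d_lt.
  by constructor; [rewrite /agrees le_x le_mu | exact: IH].
- move=> c_top /cjoin_lt_top [/cimp_lt_top nle_mu d_lt].
  by constructor; [rewrite /agrees le_x (negbTE nle_mu) | exact: IH].
Qed.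

Definition coord_trunc n (J : Type) (k : J * 'I_(n.-1.+1)) (f : Cpow n J) : Cn n :=
  truncate k.2 (f k.1).

Lemma coord_trunc_hom n (J : Type) (k : J * 'I_(n.-1.+1)) : is_hom (coord_trunc k).
Proof. exact: hom_comp (proj_hom _ k.1) (truncate_hom _ k.2). Qed.

(* Finitely many order constraints of x are realised by some coord_trunc k:
   a coordinate where up_conj -> down_disj is not the top separates them. *)
Lemma finite_order_witness n (B : HAlg) (J : Type) (m : B -> Cpow n J)
    (x : B -> Cn n) (s : seq (B * B)) :
  1 < n -> is_embedding m -> is_hom x ->
  exists k, List.Forall (agrees x (fun b => coord_trunc k (m b))) s.
Proof.
move=> n_gt1 [hm inj_m] hx.
set c := up_conj x s; set d := down_disj x s.
have xc : x c = ord_max := up_conj_top s hx.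
have xd : (x d : nat) < n.-1 := down_disj_lt_top s n_gt1 hx.
have cd_not_top : m (himp c d) <> m (htop B).
  move=> /inj_m cd_top; have [_ [_ [xi [_ xt]]]] := hx.
  have := xi c d; rewrite cd_top xt xc /= /cimp.
  by case: leqP => /= [|_ /(congr1 val) /=]; lia.
have [j cd_j] : exists j, m (himp c d) j <> m (htop B) j.
  apply: contrapT => none; apply/cd_not_top/functional_extensionality_dep => j.
  by apply: contrapT => ne; apply: none; exists j.
have [_ [_ [mi [_ mt]]]] := hm.
have d_lt_c : (m d j : nat) < m c j.
  by move: cd_j; rewrite mi mt /= /cimp; case: leqP.
exists (j, m c j); apply: agrees_of_separating.
- exact: hom_comp hm (coord_trunc_hom _).
- by rewrite /coord_trunc /truncate /= leqnn andbT (leq_ltn_trans _ d_lt_c).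
- rewrite /coord_trunc /truncate /= -/d; case: ifP => [/andP [_]|_]; first lia.
  by apply: leq_trans d_lt_c _; rewrite -ltnS.
Qed.

Lemma ultra_finite_value (K : Type) (G : set_system K) (f : K -> nat) (bound : nat) :
  UltraFilter G -> G [set k | f k < bound]%classic ->
  exists c, G [set k | f k = c]%classic.
Proof.
move=> UG; elim: bound => [G0 | b IH Gb].
  by exfalso; apply: (filter_not_empty G); apply: filterS G0 => k /=; rewrite ltn0.
have [Gfb | Gnfb] := in_ultra_setVsetC [set k | f k = b]%classic UG; first by exists b.
by apply: IH; apply: filterS (filterI Gb Gnfb) => k /= [lt ne]; lia.
Qed.

Lemma ultralimit_hom n (D : HAlg) (K : Type) (h : K -> D -> Cn n)
    (G : set_system K) :
  UltraFilter G -> (forall k, is_hom (h k)) ->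
  exists W : D -> Cn n, is_hom W /\ forall f, G [set k | h k f = W f]%classic.
Proof.
move=> UG hh.
have limit f : exists c : Cn n, G [set k | h k f = c]%classic.
  have [c Gc] := ultra_finite_value (f := fun k => nat_of_ord (h k f)) UG
    (filterS (fun k _ => ltn_ord (h k f)) filterT).
  have [k0 hk0] := filter_ex Gc.
  by exists (h k0 f); apply: filterS Gc => k hk; apply: val_inj; rewrite /= hk hk0.
have [W GW] := choice limit.
have common3 (A1 A2 A3 : set K) :
    G A1 -> G A2 -> G A3 -> exists k, A1 k /\ A2 k /\ A3 k.
  move=> G1 G2 G3; have [k [A1k [A2k A3k]]] := filter_ex (filterI G1 (filterI G2 G3)).
  by exists k.
exists W; split => //; split; [|split; [|split; [|split]]].
- move=> f g; have [k [<- [<- <-]]] := common3 _ _ _ (GW (hmeet f g)) (GW f) (GW g).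
  by have [hm _] := hh k.
- move=> f g; have [k [<- [<- <-]]] := common3 _ _ _ (GW (hjoin f g)) (GW f) (GW g).
  by have [_ [hj _]] := hh k.
- move=> f g; have [k [<- [<- <-]]] := common3 _ _ _ (GW (himp f g)) (GW f) (GW g).
  by have [_ [_ [hi _]]] := hh k.
- by have [k <-] := filter_ex (GW (hbot D)); have [_ [_ [_ [hb _]]]] := hh k.
- by have [k <-] := filter_ex (GW (htop D)); have [_ [_ [_ [_ ht]]]] := hh k.
Qed.

(* Claim (2): for B embedded in C_n^J, every order type of B -> C_n is
   realised by a homomorphism C_n^J -> C_n; take an ultrafilter containing the
   finitely satisfiable sets of order constraints. *)
Lemma order_type_through_power n (B : HAlg) (J : Type) (m : B -> Cpow n J)
    (x : B -> Cn n) :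
  1 < n -> is_embedding m -> is_hom x ->
  exists W : Cpow n J -> Cn n, is_hom W /\ same_order x (fun b => W (m b)).
Proof.
move=> n_gt1 em hx.
pose respects (s : seq (B * B)) : set (J * 'I_(n.-1.+1)) :=
  [set k | List.Forall (agrees x (fun b => coord_trunc k (m b))) s]%classic.
pose F : set_system (J * 'I_(n.-1.+1)) :=
  [set A | exists s, respects s `<=` A]%classic.
have FF : ProperFilter F.
  apply: Build_ProperFilter_ex.
    move=> A [s sA]; have [k hk] := finite_order_witness s n_gt1 em hx.
    by exists k; apply: sA.
  split.
  - by exists [::].
  - move=> A1 A2 [s1 sA1] [s2 sA2]; exists (s1 ++ s2) => k /List.Forall_app [r1 r2].
    by split; [apply: sA1 | apply: sA2].
  - by move=> A1 A2 sub [s sA]; exists s => k /sA /sub.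
have [G [UG FG]] := ultraFilterLemma FF.
have [W [hW GW]] := ultralimit_hom UG (@coord_trunc_hom n J).
exists W; split => // a b.
have Gab : G (respects [:: (a, b)]) by apply: FG; exists [:: (a, b)].
have [k [ab [ea eb]]] := filter_ex (filterI Gab (filterI (GW (m a)) (GW (m b)))).
by rewrite (List.Forall_inv ab) /= ea eb.
Qed.

Lemma amalgam_gives_condition n (A B C E : HAlg) (fB : A -> B) (fC : A -> C)
    (kB : B -> E) (kC : C -> E) :
  1 < n -> in_G n E -> is_embedding kB -> is_hom kC ->
  (forall a, kB (fB a) = kC (fC a)) ->
  forall x : B -> Cn n, is_hom x ->
    exists (y : B -> Cn n) (z : C -> Cn n),
      is_hom y /\ is_hom z /\ sigma_equiv x y /\ (forall a, y (fB a) = z (fC a)).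
Proof.
move=> n_gt1 [I [e ee]] ekB hkC comm x hx.
have [W [hW xW]] := order_type_through_power n_gt1 (emb_comp ekB ee) hx.
have hy : is_hom (fun b => W (e (kB b))).
  by apply: hom_comp hW; apply: hom_comp ekB.1 ee.1.
exists (fun b => W (e (kB b))), (fun c => W (e (kC c))).
split=> //; split; first by apply: hom_comp hW; apply: hom_comp hkC ee.1.
split; first exact: same_order_sigma_equiv.
by move=> a; rewrite comm.
Qed.

Lemma order_types_embed n (B : HAlg) (I : Type) (pr : I -> B -> Cn n) :
  in_G n B -> (forall i, is_hom (pr i)) ->
  (forall x, is_hom x -> exists i, same_order x (pr i)) ->
  is_embedding (fun b => (fun i => pr i b) : Cpow n I).
Proof.
move=> GB hpr rich; split; first exact: tuple_hom.
move=> b b' eq_bb'; apply: contrapT => ne.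
have [x [hx x_ne]] := in_G_separates GB ne.
have [i xi] := rich x hx.
apply/x_ne/(same_order_eq (same_order_sym xi)).
exact: (congr1 (fun f => f i) eq_bb').
Qed.

(* Theorem 6.4: the amalgam is the power of C_n indexed by the compatible
   pairs of homomorphisms (y, z), with the two evaluation maps. *)
Theorem theorem6p4 (n : nat) (Hn : (4 <= n)%N) (A B C : HAlg)
    (fB : A -> B) (fC : A -> C) :
  V_formation n fB fC ->
  (admits_amalgamation n fB fC <->
   ((forall x : B -> Cn n, is_hom x ->
       exists (y : B -> Cn n) (z : C -> Cn n),
         is_hom y /\ is_hom z /\ sigma_equiv x y /\
         (forall a, y (fB a) = z (fC a))) /\
    (forall x' : C -> Cn n, is_hom x' ->
       exists (y' : C -> Cn n) (z' : B -> Cn n),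
         is_hom y' /\ is_hom z' /\ sigma_equiv x' y' /\
         (forall a, y' (fC a) = z' (fB a))))).
Proof.
have n_gt1 : 1 < n by apply: leq_trans Hn.
move=> [_ [GB [GC _]]]; split.
  move=> [E [kB [kC [GE [ekB [ekC comm]]]]]].
  split; first exact: amalgam_gives_condition ekB ekC.1 comm.
  by apply: amalgam_gives_condition ekC ekB.1 _ => // a; rewrite comm.
move=> [condB condC].
pose I := {p : (B -> Cn n) * (C -> Cn n) |
           is_hom p.1 /\ is_hom p.2 /\ forall a, p.1 (fB a) = p.2 (fC a)}.
exists (Cpow n I), (fun b i => (sval i).1 b), (fun c i => (sval i).2 c).
split; first exact: Cpow_in_G.
split.
  apply: order_types_embed => // [i | x hx]; first exact: (svalP i).1.
  have [y [z [hy [hz [xy yz]]]]] := condB x hx.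
  by exists (exist _ (y, z) (conj hy (conj hz yz))); apply: sigma_equiv_same_order.
split.
  apply: order_types_embed => // [i | x hx]; first exact: (svalP i).2.1.
  have [y [z [hy [hz [xy yz]]]]] := condC x hx.
  exists (exist _ (z, y) (conj hz (conj hy (fun a => esym (yz a))))).
  exact: sigma_equiv_same_order.
by move=> a; apply: functional_extensionality_dep => i; apply: (svalP i).2.2.
Qed.
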